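(* Let $D$ be an oriented diagram with double lines representing a knot in $S_g\times S^1$, and let $c$ be a classical crossing of $D$. Then the crossing sliding move at $c$ (inserting, on each of the two strands through $c$, a double line of sign $\varepsilon$ immediately before $c$ and a double line of sign $-\varepsilon$ immediately after $c$, with the same $\varepsilon\in\{\pm1\}$ for both strands, without changing the crossing; or the inverse operation) can be realized as a finite composition of the moves (R), (V), (4), (5) defining equivalence of diagrams with double lines; in fact it is a composition of two crossing change moves.
   Context: $S_g$ is a closed oriented surface of genus $g$; a knot in $S_g\times S^1$ is a smooth embedding of $S^1$, and knots are considered up to equivalence, i.e. isotopy together with stabilization/destabilization of $S_g\times S^1$ (destabilization: cut along a torus homotopic to $C\times S^1$, $C$ a non-contractible circle on the surface, the torus being disjoint from the knot, and glue two copies of $D^2\times S^1$ to the new boundary tori). Fix $x_0\in S^1$. A knot is represented by a diagram with double lines: a virtual knot diagram in the plane (classical and virtual crossings) decorated by finitely many double lines, i.e. marks on the curve away from crossings recording the points where the knot meets $S_g\times\{x_0\}$. For an oriented diagram every double line has a sign $\pm1$ according to the direction in which the knot passes through $S_g\times\{x_0\}$. Two diagrams represent equivalent knots iff they are related by finitely many of the moves: (R) generalized Reidemeister moves of virtual knot theory; (V) sliding a double line along the curve through a virtual crossing; (4) sliding a double line along its strand through a classical crossing while switching the over/under information of that crossing; (5) creating or deleting two adjacent double lines of opposite signs on an arc. A crossing change move at a classical crossing $c$ is the composite of (5) and (4): it switches the over/under information at $c$ and leaves, on one strand through $c$, two double lines of opposite signs immediately before and after $c$. *)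

From mathcomp Require Import all_boot.
From Stdlib Require Import Relations.
Set Implicit Arguments. Unset Strict Implicit. Unset Printing Implicit Defensive.

(* One event met when travelling along the oriented knot:
   - [Pass c over pos] : passage through classical crossing labelled [c],
     as over-strand iff [over], the crossing having local writhe sign
     +1 iff [pos];
   - [DL e] : a double line of sign +1 iff [e].
   Virtual crossings are not recorded (Gauss code of a virtual diagram). *)
Inductive item : Type :=
| Pass (c : nat) (over : bool) (pos : bool)
| DL (e : bool).

(* A diagram with double lines: the cyclic Gauss word of the knot,
   written from an arbitrary base point. *)
Definition diagram := seq item.

Definition is_pass_of (c : nat) (it : item) : bool :=
  match it with Pass c' _ _ => c' == c | DL _ => false end.

Definition wf_diagram (D : diagram) : Prop :=
  forall c, filter (is_pass_of c) D = [::] \/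
            exists o s, filter (is_pass_of c) D = [:: Pass c o s; Pass c (~~ o) s].

(* Switching the over/under information at crossing [c] (this also
   reverses its writhe sign). *)
Definition flip_item (c : nat) (it : item) : item :=
  match it with
  | Pass c' o s => if c' == c then Pass c' (~~ o) (~~ s) else it
  | DL e => DL e
  end.
Definition flip (c : nat) (D : diagram) : diagram := map (flip_item c) D.

Definition cyc (D D' : diagram) : Prop := exists k, D' = rot k D.

(* Moves (V) act trivially on
   Gauss words.  Generalized Reidemeister moves (R) are not included: the
   resulting equivalence is contained in the one of the paper, so proving
   equivalence with these moves only is a stronger statement. *)
Inductive dl_move : diagram -> diagram -> Prop :=
| MoveRot (k : nat) (D : diagram) : dl_move D (rot k D)
| Move4 (a b : diagram) (c : nat) (o s e : bool) :
    dl_move (a ++ DL e :: Pass c o s :: b) (flip c (a ++ Pass c o s :: DL e :: b))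
| Move5 (a b : diagram) (e : bool) :
    dl_move (a ++ b) (a ++ DL e :: DL (~~ e) :: b).

Definition dl_equiv : diagram -> diagram -> Prop := clos_refl_sym_trans diagram dl_move.

(* Crossing change move at c (composite of (5) and (4)): switches c and
   leaves, on one strand through c, double lines of sign e just before and
   ~~e just after c. *)
Definition crossing_change (c : nat) (D D' : diagram) : Prop :=
  exists (a b : diagram) (o s e : bool),
    cyc D (a ++ Pass c o s :: b) /\
    cyc D' (flip c (a ++ DL e :: Pass c o s :: DL (~~ e) :: b)).

Definition crossing_slide (c : nat) (D D' : diagram) : Prop :=
  exists (a b d : diagram) (o1 s1 o2 s2 e : bool),
    cyc D (a ++ Pass c o1 s1 :: b ++ Pass c o2 s2 :: d) /\
    cyc D' (a ++ DL e :: Pass c o1 s1 :: DL (~~ e) ::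
            b ++ DL e :: Pass c o2 s2 :: DL (~~ e) :: d).

(* A crossing slide at c is two crossing changes at c, one on each strand
   through c: the first switches c and leaves double lines e, ~~e around c on
   the first strand; the second switches c back, leaving e, ~~e around c on the
   second strand.  Each crossing change is a move (5) creating e, ~~e in front
   of c followed by a move (4) sliding ~~e through c. *)
From mathcomp Require Import all_boot.
From Stdlib Require Import Relations.

Lemma flip_itemK c : involutive (flip_item c).
Proof.
case=> [c' o s|e] //=; case: eqP => [->|/eqP/negbTE c'Nc] /=.
  by rewrite eqxx !negbK.
by rewrite c'Nc.
Qed.

Lemma flipK c : involutive (flip c).
Proof. by move=> D; rewrite /flip -map_comp (eq_map (flip_itemK c)) map_id. Qed.

Lemma flip_cat c D1 D2 : flip c (D1 ++ D2) = flip c D1 ++ flip c D2.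
Proof. exact: map_cat. Qed.

Lemma cyc_refl D : cyc D D.
Proof. by exists 0; rewrite rot0. Qed.

Lemma dl_equiv_cyc D D' : cyc D D' -> dl_equiv D D'.
Proof. by case=> k ->; apply: rst_step; apply: MoveRot. Qed.

Lemma crossing_change_dl_equiv c D D' : crossing_change c D D' -> dl_equiv D D'.
Proof.
case=> [a [b [o [s [e [DE D'E]]]]]].
set C := flip c (a ++ DL e :: Pass c o s :: DL (~~ e) :: b).
apply: (rst_trans _ _ _ (a ++ Pass c o s :: b)); first exact: dl_equiv_cyc.
apply: (rst_trans _ _ _ (a ++ DL e :: DL (~~ e) :: Pass c o s :: b)).
  exact/rst_step/Move5.
apply: (rst_trans _ _ _ C); last exact/rst_sym/dl_equiv_cyc.
by apply: rst_step; have := Move4 (a ++ [:: DL e]) b c o s (~~ e); rewrite -!catA.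
Qed.

Lemma crossing_slide_crossing_changes c D D' :
  crossing_slide c D D' ->
  exists D1, crossing_change c D D1 /\ crossing_change c D1 D'.
Proof.
case=> [a [b [d [o1 [s1 [o2 [s2 [e [DE D'E]]]]]]]]].
set A := a ++ DL e :: Pass c o1 s1 :: DL (~~ e) :: b.
exists (flip c (A ++ Pass c o2 s2 :: d)); split.
  exists a, (b ++ Pass c o2 s2 :: d), o1, s1, e.
  by split; last by rewrite /A -catA; apply: cyc_refl.
exists (flip c A), (flip c d), (~~ o2), (~~ s2), e; split.
  by rewrite flip_cat /= eqxx; apply: cyc_refl.
by rewrite flip_cat flipK /= eqxx !negbK flipK /A -catA.
Qed.

Theorem mainTheorem1 (D D' : diagram) (c : nat) :
  wf_diagram D ->
  crossing_slide c D D' ->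
  (exists D1, crossing_change c D D1 /\ crossing_change c D1 D') /\
  dl_equiv D D' /\ dl_equiv D' D.
Proof.
move=> _ /crossing_slide_crossing_changes changes.
have equiv : dl_equiv D D'.
  case: changes => D1 [/crossing_change_dl_equiv DD1 /crossing_change_dl_equiv D1D'].
  exact: (rst_trans _ _ _ _ _ DD1 D1D').
by split=> //; split=> //; apply: rst_sym.
Qed.
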